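(* Let $p>0$ and $a_k=k^p$, $k\ge1$. Then $\lim_{N\to\infty}E[U_j^N]=I(\alpha;j)<\infty$ for all $j\ge2$.
   Context: For $N\ge2$, coupon type $k\in\{1,\dots,N\}$ has probability $a_k/\sum_{i=1}^Na_i$; $U_j^N$ is the number of empty album places of the $j$-th collector when the first collector completes her set (each collector passes duplicates to the next one), with $$E[U_j^N]=\sum_{k=1}^N\int_0^\infty a_k e^{-a_k t}\frac{(a_kt)^{j-1}}{(j-1)!}\prod_{i\ne k,\,1\le i\le N}\big(1-e^{-a_i t}\big)\,dt.$$ $x_\alpha:=\inf\{x\in[0,1]:\sum_k x^{a_k}=\infty\}$, $L(x;\alpha;j):=\sum_{k}a_k^j\frac{x^{a_k}}{1-x^{a_k}}$, $F(x;\alpha):=\prod_{k}(1-x^{a_k})$, $I(\alpha;j):=\frac{1}{(j-1)!}\int_0^{x_\alpha}L(x;\alpha;j)F(x;\alpha)|\ln x|^{j-1}\frac{dx}{x}$. *)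

From Stdlib Require Import Reals Lra Lia ClassicalEpsilon Factorial.
Open Scope R_scope.

(* x^y for x >= 0 and real y, with the convention 0^y = 0 (y > 0). *)
Definition rpow (x y : R) : R := if Rlt_dec 0 x then Rpower x y else 0.

(* Limit of a real sequence (value chosen classically; meaningful when the
   sequence converges). *)
Definition lim_seq (u : nat -> R) : R :=
  epsilon (inhabits 0) (fun l => Un_cv u l).

Definition sum1 (f : nat -> R) (n : nat) : R :=
  match n with O => 0 | S m => sum_f_R0 (fun i => f (S i)) m end.

Fixpoint prod1 (f : nat -> R) (n : nat) : R :=
  match n with O => 1 | S m => prod1 f m * f (S m) end.

Fixpoint prod1_except (f : nat -> R) (k0 : nat) (n : nat) : R :=
  match n with
  | O => 1
  | S m => prod1_except f k0 m * (if Nat.eq_dec (S m) k0 then 1 else f (S m))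
  end.

Definition improper_int_0_inf (f : R -> R) (l : R) : Prop :=
  (forall T, 0 <= T -> inhabited (Riemann_integrable f 0 T)) /\
  (forall eps, 0 < eps -> exists M, 0 <= M /\
     forall T (pr : Riemann_integrable f 0 T), M <= T ->
       Rabs (RiemannInt pr - l) < eps).

Definition improper_int_open (f : R -> R) (a b l : R) : Prop :=
  (forall c d, a < c -> c <= d -> d < b -> inhabited (Riemann_integrable f c d)) /\
  (forall eps, 0 < eps -> exists del, 0 < del /\
     forall c d (pr : Riemann_integrable f c d),
       a < c -> c < a + del -> b - del < d -> d < b -> c <= d ->
       Rabs (RiemannInt pr - l) < eps).

Definition apow (p : R) (k : nat) : R := Rpower (INR k) p.

(* E[U_j^N] = sum_{k=1}^N \int_0^oo a_k e^{-a_k t} (a_k t)^{j-1}/(j-1)!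
                           prod_{i<>k, 1<=i<=N} (1 - e^{-a_i t}) dt ,
   stated relationally: e is this value (each improper integral converges). *)
Definition EU_integrand (a : nat -> R) (N j k : nat) (t : R) : R :=
  a k * exp (- (a k * t)) * (a k * t) ^ (j - 1) / INR (fact (j - 1)) *
  prod1_except (fun i => 1 - exp (- (a i * t))) k N.

Definition is_EU (a : nat -> R) (N j : nat) (e : R) : Prop :=
  exists c : nat -> R,
    (forall k, (1 <= k <= N)%nat -> improper_int_0_inf (EU_integrand a N j k) (c k)) /\
    e = sum1 c N.

(* x_alpha = inf { x in [0,1] : sum_k x^{a_k} = oo } *)
Definition series_diverges (u : nat -> R) : Prop :=
  ~ (exists l, Un_cv (sum1 u) l).

Definition is_x_alpha (a : nat -> R) (xa : R) : Prop :=
  is_lub (fun y => exists x, 0 <= x <= 1 /\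
                     series_diverges (fun k => rpow x (a k)) /\ y = - x) (- xa).

Definition Lfun (a : nat -> R) (j : nat) (x : R) : R :=
  lim_seq (sum1 (fun k => a k ^ j * rpow x (a k) / (1 - rpow x (a k)))).

Definition Ffun (a : nat -> R) (x : R) : R :=
  lim_seq (prod1 (fun k => 1 - rpow x (a k))).

Definition I_integrand (a : nat -> R) (j : nat) (x : R) : R :=
  Lfun a j x * Ffun a x * Rabs (ln x) ^ (j - 1) / INR (fact (j - 1)) / x.

From Stdlib Require Import Reals Lra Lia ClassicalEpsilon Factorial FunctionalExtensionality.
From Coquelicot Require Import Coquelicot.
Open Scope R_scope.

(* Substituting x = exp (- t), the integrand of I(alpha; j) becomes
   G(t) = F(t) L(t) t^(j-1)/(j-1)! with F(t) = prod_k (1 - e^(-a_k t)) and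
   L(t) = sum_k a_k^j e^(-a_k t) / (1 - e^(-a_k t)), while the integrands of E[U_j^N] add up to the
   same expression with F and L truncated at N.  Take m with p m >= 2 and p (m + 1 - j) >= 2.
   From e^(-s) s^m <= m^m we get e^(-a_k t) <= C / (t^m k^2) and the k-th term of L is at most
   C / (t^(m+1) k^2), so the truncations converge uniformly on compact subsets of (0, oo) with
   errors O(1/N), and all of them are bounded by K on [0, 1] (there F_(m+1)(t) = O(t^(m+1))
   compensates L(t) = O(t^-(m+1))) and by K / t^2 on [1, oo).  Hence the integrals over [0, u]
   and [v, oo) are small uniformly in N, the integrals over [u, v] converge, and E[U_j^N] tends
   to I(alpha; j).  Finally x_alpha = 1, since sum_k x^(k^p) converges for every x < 1. *)

Lemma sum1_S f n : sum1 f (S n) = sum1 f n + f (S n).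
Proof. destruct n; simpl; lra. Qed.

Lemma sum1_ext f g n :
  (forall k, (1 <= k <= n)%nat -> f k = g k) -> sum1 f n = sum1 g n.
Proof.
  induction n as [|n IH]; intros H; [reflexivity|].
  rewrite !sum1_S, IH by (intros; apply H; lia). rewrite H by lia; reflexivity.
Qed.

Lemma sum1_scal c f n : sum1 (fun k => c * f k) n = c * sum1 f n.
Proof. induction n as [|n IH]; [simpl; ring|]. rewrite !sum1_S, IH; ring. Qed.

Lemma sum1_const0 n : sum1 (fun _ => 0) n = 0.
Proof. induction n as [|n IH]; [reflexivity|]. rewrite sum1_S, IH; ring. Qed.

Lemma sum1_diff_le f g n n' : (n <= n')%nat ->
  (forall k, (n < k <= n')%nat -> f k <= g k) ->
  sum1 f n' - sum1 f n <= sum1 g n' - sum1 g n.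
Proof.
  intros hn H; induction hn as [|n' hn IH]; [lra|]. rewrite !sum1_S.
  pose proof (H (S n') ltac:(lia)); pose proof (IH ltac:(intros; apply H; lia)); lra.
Qed.

Lemma sum1_le f g n :
  (forall k, (1 <= k <= n)%nat -> f k <= g k) -> sum1 f n <= sum1 g n.
Proof.
  intros H; pose proof (sum1_diff_le f g 0 n ltac:(lia) ltac:(intros; apply H; lia)).
  simpl in *; lra.
Qed.

Lemma sum1_nonneg f n : (forall k, (1 <= k <= n)%nat -> 0 <= f k) -> 0 <= sum1 f n.
Proof. intros H; rewrite <- (sum1_const0 n); apply sum1_le, H. Qed.

Lemma sum1_le_mono f n n' : (n <= n')%nat ->
  (forall k, (1 <= k <= n')%nat -> 0 <= f k) -> sum1 f n <= sum1 f n'.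
Proof.
  intros hn H; pose proof (sum1_diff_le (fun _ => 0) f n n' hn ltac:(intros; apply H; lia)).
  rewrite !sum1_const0 in *; lra.
Qed.

Lemma prod1_ext f g n :
  (forall k, (1 <= k <= n)%nat -> f k = g k) -> prod1 f n = prod1 g n.
Proof.
  induction n as [|n IH]; intros H; [reflexivity|]. simpl.
  rewrite IH by (intros; apply H; lia). rewrite H by lia; reflexivity.
Qed.

Lemma prod1_le f g n :
  (forall k, (1 <= k <= n)%nat -> 0 <= f k <= g k) -> 0 <= prod1 f n <= prod1 g n.
Proof.
  induction n as [|n IH]; intros H; simpl; [lra|].
  pose proof (IH ltac:(intros; apply H; lia)); pose proof (H (S n) ltac:(lia)). nra.
Qed.

Lemma prod1_const1 n : prod1 (fun _ => 1) n = 1.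
Proof. induction n as [|n IH]; simpl; [|rewrite IH]; ring. Qed.

Lemma prod1_range f n :
  (forall k, (1 <= k <= n)%nat -> 0 <= f k <= 1) -> 0 <= prod1 f n <= 1.
Proof. intros H; rewrite <- (prod1_const1 n); apply prod1_le, H. Qed.

Lemma prod1_pos f n : (forall k, (1 <= k <= n)%nat -> 0 < f k) -> 0 < prod1 f n.
Proof.
  induction n as [|n IH]; intros H; simpl; [lra|].
  apply Rmult_lt_0_compat; [apply IH; intros; apply H|apply H]; lia.
Qed.

Lemma prod1_le_anti f n n' : (n <= n')%nat ->
  (forall k, (1 <= k <= n')%nat -> 0 <= f k <= 1) -> prod1 f n' <= prod1 f n.
Proof.
  intros hn H; induction hn as [|n' hn IH]; [lra|]. simpl.
  pose proof (H (S n') ltac:(lia)); pose proof (IH ltac:(intros; apply H; lia)).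
  pose proof (prod1_le f (fun _ => 1) n' ltac:(intros; apply H; lia)). nra.
Qed.

Lemma prod1_except_gt f k n : (n < k)%nat -> prod1_except f k n = prod1 f n.
Proof.
  induction n as [|n IH]; intros H; [reflexivity|]. cbn [prod1_except prod1]. rewrite IH by lia.
  destruct (Nat.eq_dec (S n) k); [lia|reflexivity].
Qed.

Lemma prod1_except_mul f k n : (1 <= k <= n)%nat -> prod1_except f k n * f k = prod1 f n.
Proof.
  induction n as [|n IH]; intros H; [lia|]. cbn [prod1_except prod1].
  destruct (Nat.eq_dec (S n) k) as [<-|].
  - rewrite prod1_except_gt by lia; ring.
  - rewrite <- IH by lia; ring.
Qed.

Lemma prod1_except_range f k n :
  (forall i, (1 <= i <= n)%nat -> 0 <= f i <= 1) -> 0 <= prod1_except f k n <= 1.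
Proof.
  induction n as [|n IH]; intros H; cbn [prod1_except]; [lra|].
  pose proof (IH ltac:(intros; apply H; lia)).
  destruct (Nat.eq_dec (S n) k); [lra|]. pose proof (H (S n) ltac:(lia)). nra.
Qed.

Lemma lim_seq_unique u l : Un_cv u l -> lim_seq u = l.
Proof.
  intros H; apply (UL_sequence u); [|exact H].
  apply (epsilon_spec (inhabits 0) (fun l => Un_cv u l)); now exists l.
Qed.

Lemma Un_cv_le_eventually u l c :
  Un_cv u l -> (exists N, forall n, (N <= n)%nat -> u n <= c) -> l <= c.
Proof.
  intros H [N HN]; apply Rnot_lt_le; intros Hc.
  destruct (H (l - c)) as [N' HN']; [lra|].
  specialize (HN' (max N N') ltac:(lia)); specialize (HN (max N N') ltac:(lia)).
  unfold Rdist in HN'; apply Rabs_def2 in HN'; lra.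
Qed.

Lemma Un_cv_ge_eventually u l c :
  Un_cv u l -> (exists N, forall n, (N <= n)%nat -> c <= u n) -> c <= l.
Proof.
  intros H [N HN]; apply Ropp_le_cancel.
  apply (Un_cv_le_eventually (fun n => - u n)); [|exists N; intros n hn; specialize (HN n hn); lra].
  intros eps heps; destruct (H eps heps) as [N' HN']; exists N'; intros n hn.
  unfold Rdist; rewrite <- Rabs_Ropp; replace (- (- u n - - l)) with (u n - l) by ring.
  apply HN', hn.
Qed.

Lemma INR_inv_small c eps : 0 < eps ->
  exists N, (1 <= N)%nat /\ forall n, (N <= n)%nat -> c * / INR n < eps.
Proof.
  intros heps.
  destruct (archimed_cor1 (eps / (Rabs c + 1))) as [N [HN hN]].
  { apply Rdiv_lt_0_compat; [lra|pose proof (Rabs_pos c); lra]. }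
  exists N; split; [lia|]; intros n hn.
  assert (H0 : 0 < INR N) by (apply lt_0_INR; lia).
  assert (Hn : / INR n <= / INR N) by (apply Rinv_le_contravar; [lra|apply le_INR; lia]).
  assert (0 < / INR n) by (apply Rinv_0_lt_compat, lt_0_INR; lia).
  pose proof (Rle_abs c); pose proof (Rabs_pos c).
  assert (Habs : Rabs c * / INR n < eps / (Rabs c + 1) * (Rabs c + 1)) by nra.
  replace (eps / (Rabs c + 1) * (Rabs c + 1)) with eps in Habs by (field; lra).
  apply Rle_lt_trans with (Rabs c * / INR n); [apply Rmult_le_compat_r|]; lra.
Qed.

Lemma Un_cv_tail_le u l c N : Un_cv u l -> 0 <= c -> (1 <= N)%nat ->
  (forall n, (N <= n)%nat -> u N - u n <= c * (/ INR N - / INR n)) ->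
  u N - l <= c * / INR N.
Proof.
  intros Hu hc hN H.
  enough (u N - c * / INR N <= l) by lra.
  apply (Un_cv_ge_eventually u l _ Hu); exists N; intros n hn; specialize (H n hn).
  assert (0 <= / INR n) by (apply Rlt_le, Rinv_0_lt_compat, lt_0_INR; lia).
  nra.
Qed.

Definition inv_sq (k : nat) : R := / INR k ^ 2.

Lemma inv_sq_sum_tail n n' : (1 <= n <= n')%nat ->
  sum1 inv_sq n' - sum1 inv_sq n <= / INR n - / INR n'.
Proof.
  intros [hn hn']; induction hn' as [|n' hn' IH]; [lra|].
  rewrite sum1_S.
  replace (inv_sq (S n')) with (/ (INR n' + 1) ^ 2) by (unfold inv_sq; now rewrite S_INR).
  rewrite S_INR.
  assert (1 <= INR n') by (apply (le_INR 1); lia).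
  (* telescoping: 1/(k+1)^2 <= 1/k - 1/(k+1) *)
  assert (/ (INR n' + 1) ^ 2 <= / INR n' - / (INR n' + 1)).
  { replace (/ INR n' - / (INR n' + 1)) with (/ (INR n' * (INR n' + 1))) by (field; lra).
    apply Rinv_le_contravar; nra. }
  lra.
Qed.

Lemma inv_sq_sum_le_2 n : sum1 inv_sq n <= 2.
Proof.
  destruct n as [|n]; [simpl; lra|].
  pose proof (inv_sq_sum_tail 1 (S n) ltac:(lia)).
  assert (0 < / INR (S n)) by (apply Rinv_0_lt_compat, lt_0_INR; lia).
  assert (sum1 inv_sq 1 = 1) by (unfold inv_sq; simpl; field).
  simpl INR in *; rewrite Rinv_1 in *; lra.
Qed.

Lemma sum1_tail_le_inv_sq f c n n' : 0 <= c ->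
  (forall k, (1 <= k)%nat -> f k <= c * inv_sq k) -> (1 <= n <= n')%nat ->
  sum1 f n' - sum1 f n <= c * (/ INR n - / INR n').
Proof.
  intros hc H hn; eapply Rle_trans.
  - apply (sum1_diff_le _ (fun k => c * inv_sq k)); [lia|]; intros k hk; apply H; lia.
  - rewrite !sum1_scal, <- Rmult_minus_distr_l; apply Rmult_le_compat_l, inv_sq_sum_tail; auto.
Qed.

Lemma sum1_le_inv_sq f c n : 0 <= c ->
  (forall k, (1 <= k)%nat -> f k <= c * inv_sq k) -> sum1 f n <= 2 * c.
Proof.
  intros hc H; eapply Rle_trans; [apply (sum1_le _ (fun k => c * inv_sq k)); intros; apply H; lia|].
  rewrite sum1_scal, Rmult_comm; apply Rmult_le_compat_r, inv_sq_sum_le_2; exact hc.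
Qed.

Lemma apow_ge_1 p k : 0 < p -> (1 <= k)%nat -> 1 <= apow p k.
Proof.
  intros hp hk; unfold apow, Rpower.
  assert (1 <= INR k) by (apply (le_INR 1); lia).
  assert (0 <= ln (INR k)) by (rewrite <- ln_1; apply ln_le; lra).
  pose proof (exp_ineq1_le (p * ln (INR k))); nra.
Qed.

Lemma sq_le_apow_pow p k n : 0 < p -> (1 <= k)%nat -> 2 <= p * INR n ->
  INR k ^ 2 <= apow p k ^ n.
Proof.
  intros hp hk hn; unfold apow.
  assert (0 < INR k) by (apply lt_0_INR; lia).
  rewrite <- !Rpower_pow, Rpower_mult by (try apply exp_pos; lra).
  apply Rle_Rpower; [apply (le_INR 1); lia|simpl; lra].
Qed.

Lemma exp_INR_mul n x : exp (INR n * x) = exp x ^ n.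
Proof.
  induction n as [|n IH]; [simpl; rewrite Rmult_0_l, exp_0; ring|].
  rewrite S_INR, Rmult_plus_distr_r, exp_plus, IH, Rmult_1_l; simpl; ring.
Qed.

(* From s/m <= exp (s/m), raised to the m-th power. *)
Lemma exp_opp_mul_pow_le m s : (1 <= m)%nat -> 0 < s -> exp (- s) * s ^ m <= INR m ^ m.
Proof.
  intros hm hs.
  assert (Hm : 0 < INR m) by (apply lt_0_INR; lia).
  set (r := s / INR m).
  assert (Hs : s = INR m * r) by (unfold r; field; lra).
  assert (Hr : r ^ m <= exp r ^ m).
  { apply pow_incr; pose proof (exp_ineq1_le r).
    split; [unfold r; apply Rlt_le, Rdiv_lt_0_compat|]; lra. }
  assert (E : exp (- s) * exp r ^ m = 1).
  { rewrite <- exp_INR_mul, <- Hs, <- exp_plus, Rplus_opp_l; apply exp_0. }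
  rewrite Hs at 2; rewrite Rpow_mult_distr.
  replace (exp (- s) * (INR m ^ m * r ^ m)) with (INR m ^ m * exp (- s) * r ^ m) by ring.
  rewrite <- (Rmult_1_r (INR m ^ m)) at 2; rewrite <- E, <- Rmult_assoc.
  apply Rmult_le_compat_l; [|exact Hr].
  pose proof (exp_pos (- s)); pose proof (pow_lt _ m Hm); nra.
Qed.

Lemma exp_opp_ratio_le s : 0 < s -> exp (- s) / (1 - exp (- s)) <= 2 * exp (- (s / 2)) / s.
Proof.
  intros hs; set (h := exp (- (s / 2))).
  assert (Hy : exp (- s) = h * h) by (unfold h; rewrite <- exp_plus; f_equal; field).
  assert (Hh : 0 < h) by apply exp_pos.
  (* exp (s/2) >= 1 + s/2 and exp (s/2) * h = 1 *)
  assert (Hsh : h * (s / 2) <= 1 - h).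
  { assert (E : exp (s / 2) * h = 1) by (unfold h; rewrite <- exp_plus, Rplus_opp_r; apply exp_0).
    pose proof (exp_ineq1_le (s / 2)); nra. }
  assert (Hden : h * (s / 2) <= 1 - h * h) by nra.
  assert (0 < h * (s / 2)) by (apply Rmult_lt_0_compat; lra).
  rewrite Hy; apply (Rmult_le_reg_r ((1 - h * h) * s)); [apply Rmult_lt_0_compat; lra|].
  replace (h * h / (1 - h * h) * ((1 - h * h) * s)) with (h * h * s) by (field; lra).
  replace (2 * h / s * ((1 - h * h) * s)) with (2 * h * (1 - h * h)) by (field; lra).
  nra.
Qed.

Definition decay (p : R) (k : nat) (t : R) : R := exp (- (apow p k * t)).

Definition Cdecay (m : nat) : R := 2 ^ (m + 1) * INR m ^ m.

Lemma Cdecay_pos m : 0 < Cdecay m.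
Proof.
  unfold Cdecay; destruct m as [|m]; [simpl; lra|].
  apply Rmult_lt_0_compat; apply pow_lt; [lra|apply lt_0_INR; lia].
Qed.

Lemma Cdecay_div_nonneg m n t : 0 < t -> 0 <= Cdecay m / t ^ n.
Proof. intros ht; apply Rlt_le, Rdiv_lt_0_compat; [apply Cdecay_pos|apply pow_lt, ht]. Qed.

Lemma exp_opp_ratio_pow_le m s : (1 <= m)%nat -> 0 < s ->
  exp (- s) / (1 - exp (- s)) * s ^ (m + 1) <= Cdecay m.
Proof.
  intros hm hs; pose proof (exp_opp_mul_pow_le m (s / 2) hm ltac:(lra)) as H.
  assert (0 < s ^ (m + 1)) by (apply pow_lt; lra).
  eapply Rle_trans; [apply Rmult_le_compat_r; [lra|apply exp_opp_ratio_le, hs]|].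
  replace (2 * exp (- (s / 2)) / s * s ^ (m + 1))
    with (2 ^ (m + 1) * (exp (- (s / 2)) * (s / 2) ^ m)).
  - apply Rmult_le_compat_l; [apply pow_le; lra|exact H].
  - unfold Rdiv; rewrite Rpow_mult_distr, pow_inv, !pow_add; field.
    split; [lra|apply pow_nonzero; lra].
Qed.

(** * Truncated products and sums *)

(* With x = exp (- t): Flim p t is F(x; alpha), Llim p j t is L(x; alpha; j) and tfact j t is
   |ln x|^(j-1)/(j-1)!, so that Glim p j t = I_integrand (apow p) j x * x (I_integrand_exp_opp);
   Fpart and Lpart are the truncations at N, and EU_sum p j N t, the sum over k of the integrands
   of E[U_j^N], equals Fpart * Lpart * tfact (EU_sum_eq). *)
Definition Fpart (p : R) (N : nat) (t : R) : R := prod1 (fun i => 1 - decay p i t) N.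

Definition Flim (p t : R) : R := lim_seq (fun N => Fpart p N t).

Definition Lterm (p : R) (j k : nat) (t : R) : R :=
  apow p k ^ j * decay p k t / (1 - decay p k t).

Definition Lpart (p : R) (j N : nat) (t : R) : R := sum1 (fun k => Lterm p j k t) N.

Definition Llim (p : R) (j : nat) (t : R) : R := lim_seq (fun N => Lpart p j N t).

Definition tfact (j : nat) (t : R) : R := t ^ (j - 1) / INR (fact (j - 1)).

Definition Glim (p : R) (j : nat) (t : R) : R := Flim p t * Llim p j t * tfact j t.

Definition EU_sum (p : R) (j N : nat) (t : R) : R :=
  sum1 (fun k => EU_integrand (apow p) N j k t) N.

Definition Kdom (p : R) (m : nat) : R := 2 * Cdecay m * (prod1 (apow p) (m + 1) + 1).

Definition Cunif (j m : nat) (u v : R) : R :=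
  (Cdecay m / u ^ m * (2 * (Cdecay m / u ^ (m + 1))) + Cdecay m / u ^ (m + 1)) * v ^ (j - 1).

Definition dominated (f : R -> R) (K : R) : Prop :=
  (forall t, 0 <= t -> 0 <= f t) /\
  (forall t, 0 <= t <= 1 -> f t <= K) /\
  (forall t, 1 <= t -> f t <= K / t ^ 2).

Lemma dominated_intro f K : f 0 = 0 ->
  (forall t, 0 < t -> 0 <= f t /\ (t <= 1 -> f t <= K) /\ (1 <= t -> f t <= K / t ^ 2)) ->
  dominated f K.
Proof.
  intros H0 Hpos.
  assert (HK : 0 <= K).
  { destruct (Hpos 1 ltac:(lra)) as (H1 & H2 & _); specialize (H2 (Rle_refl 1)); lra. }
  split; [|split]; intros t ht; (destruct (Req_dec t 0) as [->|]; [lra|]);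
    destruct (Hpos t ltac:(lra)) as (H1 & H2 & H3); [exact H1|apply H2; lra|apply H3; lra].
Qed.

Lemma fact_ge_1 n : 1 <= INR (fact n).
Proof. apply (le_INR 1); pose proof (lt_O_fact n); lia. Qed.

Lemma tfact_range j t : 0 <= t -> 0 <= tfact j t <= t ^ (j - 1).
Proof.
  intros ht; unfold tfact; pose proof (fact_ge_1 (j - 1)); pose proof (pow_le t (j - 1) ht).
  split; [apply Rmult_le_pos; [lra|apply Rlt_le, Rinv_0_lt_compat; lra]|].
  unfold Rdiv; rewrite <- (Rmult_1_r (t ^ (j - 1))) at 2; apply Rmult_le_compat_l; [lra|].
  rewrite <- Rinv_1; apply Rinv_le_contravar; lra.
Qed.

Section Decay.

Variables (p : R) (m : nat).
Hypotheses (hp : 0 < p) (hpm : 2 <= p * INR m).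

Lemma m_ge_1 : (1 <= m)%nat.
Proof. apply Nat.neq_0_lt_0; intros E; rewrite E in hpm; simpl in hpm; lra. Qed.

Lemma decay_lt_1 k t : (1 <= k)%nat -> 0 < t -> decay p k t < 1.
Proof.
  intros hk ht; unfold decay; rewrite <- exp_0; apply exp_increasing.
  pose proof (apow_ge_1 p k hp hk); nra.
Qed.

Lemma decay_range k t : (1 <= k)%nat -> 0 <= t -> 0 < decay p k t <= 1.
Proof.
  intros hk ht; split; [apply exp_pos|].
  destruct (Req_dec t 0) as [->|]; [unfold decay; rewrite Rmult_0_r, Ropp_0, exp_0; lra|].
  pose proof (decay_lt_1 k t hk ltac:(lra)); lra.
Qed.

Lemma decay_le_inv_sq k t : (1 <= k)%nat -> 0 < t -> decay p k t <= Cdecay m / t ^ m * inv_sq k.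
Proof.
  intros hk ht; pose proof (apow_ge_1 p k hp hk) as Ha; set (a := apow p k) in *.
  pose proof (sq_le_apow_pow p k m hp hk hpm) as Hk; fold a in Hk.
  pose proof (exp_opp_mul_pow_le m (a * t) m_ge_1 ltac:(nra)) as He.
  rewrite Rpow_mult_distr in He; change (exp (- (a * t))) with (decay p k t) in He.
  assert (Hc : INR m ^ m <= Cdecay m).
  { unfold Cdecay; pose proof (pow_R1_Rle 2 (m + 1) ltac:(lra)).
    pose proof (pow_le (INR m) m (pos_INR m)); nra. }
  pose proof (decay_range k t hk ltac:(lra)).
  assert (0 < t ^ m) by (apply pow_lt; lra).
  assert (0 < INR k ^ 2) by (apply pow_lt, lt_0_INR; lia).
  unfold inv_sq; set (T := t ^ m) in *; set (K2 := INR k ^ 2) in *.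
  apply (Rmult_le_reg_r (T * K2)); [nra|].
  replace (Cdecay m / T * / K2 * (T * K2)) with (Cdecay m) by (field; lra).
  assert (decay p k t * T * (a ^ m - K2) >= 0) by (apply Rle_ge; repeat apply Rmult_le_pos; lra).
  nra.
Qed.

Lemma decay_sum_tail N N' t : 0 < t -> (1 <= N <= N')%nat ->
  sum1 (fun k => decay p k t) N' - sum1 (fun k => decay p k t) N <=
  Cdecay m / t ^ m * (/ INR N - / INR N').
Proof.
  intros ht; apply sum1_tail_le_inv_sq; [apply Cdecay_div_nonneg, ht|].
  intros k hk; apply decay_le_inv_sq; auto.
Qed.

Lemma decay_series_cv t : 0 < t -> exists l, Un_cv (sum1 (fun k => decay p k t)) l.
Proof.
  intros ht; destruct (growing_cv (sum1 (fun k => decay p k t))) as [l Hl]; [| |now exists l].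
  - intros n; rewrite sum1_S; pose proof (decay_range (S n) t ltac:(lia) ltac:(lra)); lra.
  - exists (2 * (Cdecay m / t ^ m)); intros x [n ->].
    apply sum1_le_inv_sq; [apply Cdecay_div_nonneg, ht|]; intros k hk; apply decay_le_inv_sq; auto.
Qed.

Lemma Fpart_range N t : 0 < t -> 0 < Fpart p N t <= 1.
Proof.
  intros ht; unfold Fpart; split.
  - apply prod1_pos; intros k hk; pose proof (decay_lt_1 k t ltac:(lia) ht); lra.
  - apply prod1_range; intros k hk.
    pose proof (decay_range k t ltac:(lia) ltac:(lra)); lra.
Qed.

Lemma Fpart_anti N N' t : 0 < t -> (N <= N')%nat -> Fpart p N' t <= Fpart p N t.
Proof.
  intros ht hN; apply prod1_le_anti; [exact hN|]; intros k hk.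
  pose proof (decay_range k t ltac:(lia) ltac:(lra)); lra.
Qed.

(* F_n - F_(n+1) = F_n d_(n+1) <= d_(n+1), summed up *)
Lemma Fpart_tail N N' t : 0 < t -> (1 <= N <= N')%nat ->
  Fpart p N t - Fpart p N' t <= Cdecay m / t ^ m * (/ INR N - / INR N').
Proof.
  intros ht hN; eapply Rle_trans; [|apply decay_sum_tail; auto].
  destruct hN as [_ hN]; induction hN as [|n hn IH]; [lra|].
  rewrite sum1_S; unfold Fpart in *; cbn [prod1].
  pose proof (Fpart_range n t ht); unfold Fpart in *.
  pose proof (decay_range (S n) t ltac:(lia) ltac:(lra)); nra.
Qed.

Lemma Flim_cv t : 0 < t -> Un_cv (fun N => Fpart p N t) (Flim p t).
Proof.
  intros ht; destruct (decreasing_cv (fun N => Fpart p N t)) as [l Hl].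
  - intros n; apply Fpart_anti; auto.
  - exists 0; intros x [n ->]; unfold opp_seq; pose proof (Fpart_range n t ht); lra.
  - unfold Flim; rewrite (lim_seq_unique _ l Hl); exact Hl.
Qed.

Lemma Flim_bounds N t : 0 < t -> (1 <= N)%nat ->
  0 <= Flim p t <= Fpart p N t /\ Fpart p N t - Flim p t <= Cdecay m / t ^ m * / INR N.
Proof.
  intros ht hN; pose proof (Flim_cv t ht) as H; split; [split|].
  - apply (Un_cv_ge_eventually _ _ 0 H); exists O; intros n _; pose proof (Fpart_range n t ht); lra.
  - apply (Un_cv_le_eventually _ _ _ H); exists N; intros n hn; apply Fpart_anti; auto.
  - apply (Un_cv_tail_le (fun n => Fpart p n t)); auto.
    + apply Cdecay_div_nonneg, ht.
    + intros n hn; apply Fpart_tail; auto.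
Qed.

Lemma Lterm_nonneg j k t : (1 <= k)%nat -> 0 < t -> 0 <= Lterm p j k t.
Proof.
  intros hk ht; pose proof (decay_range k t hk ltac:(lra)); pose proof (decay_lt_1 k t hk ht).
  pose proof (apow_ge_1 p k hp hk); unfold Lterm.
  apply Rlt_le, Rdiv_lt_0_compat; [apply Rmult_lt_0_compat; [apply pow_lt|]|]; lra.
Qed.

Lemma Lpart_nonneg j N t : 0 < t -> 0 <= Lpart p j N t.
Proof. intros ht; apply sum1_nonneg; intros k hk; apply Lterm_nonneg; [lia|exact ht]. Qed.

Lemma Lpart_mono j N N' t : 0 < t -> (N <= N')%nat -> Lpart p j N t <= Lpart p j N' t.
Proof.
  intros ht hN; apply sum1_le_mono; [exact hN|]; intros k hk; apply Lterm_nonneg; [lia|exact ht].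
Qed.

Lemma EU_integrand_eq j N k t : (1 <= j)%nat -> (1 <= k <= N)%nat -> 0 < t ->
  EU_integrand (apow p) N j k t = Lterm p j k t * Fpart p N t * tfact j t.
Proof.
  intros hj hk ht; unfold EU_integrand, Lterm, tfact.
  pose proof (decay_lt_1 k t ltac:(lia) ht).
  pose proof (prod1_except_mul (fun i => 1 - exp (- (apow p i * t))) k N hk) as E.
  change (prod1 (fun i => 1 - exp (- (apow p i * t))) N) with (Fpart p N t) in E.
  change (exp (- (apow p k * t))) with (decay p k t) in *.
  replace (prod1_except (fun i => 1 - exp (- (apow p i * t))) k N)
    with (Fpart p N t / (1 - decay p k t))
    by (rewrite <- E; change (exp (- (apow p k * t))) with (decay p k t); field; lra).
  replace (apow p k ^ j) with (apow p k * apow p k ^ (j - 1))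
    by (destruct j; [lia|]; simpl; rewrite Nat.sub_0_r; ring).
  pose proof (fact_ge_1 (j - 1)); rewrite Rpow_mult_distr; field; lra.
Qed.

Lemma EU_sum_eq j N t : (1 <= j)%nat -> 0 < t ->
  EU_sum p j N t = Fpart p N t * Lpart p j N t * tfact j t.
Proof.
  intros hj ht; unfold EU_sum, Lpart.
  rewrite (sum1_ext _ (fun k => Fpart p N t * tfact j t * Lterm p j k t)).
  - rewrite sum1_scal; ring.
  - intros k hk; rewrite EU_integrand_eq by auto; ring.
Qed.

Lemma Fpart_le_poly M t : 0 < t -> Fpart p M t <= prod1 (apow p) M * t ^ M.
Proof.
  intros ht; replace (prod1 (apow p) M * t ^ M) with (prod1 (fun i => apow p i * t) M)
    by (induction M as [|M IH]; simpl; [|rewrite IH]; ring).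
  apply prod1_le; intros k hk; pose proof (decay_lt_1 k t ltac:(lia) ht).
  pose proof (exp_ineq1_le (- (apow p k * t))); unfold decay in *; lra.
Qed.

Lemma EU_integrand_nonneg j N k t : (1 <= k)%nat -> 0 <= t -> 0 <= EU_integrand (apow p) N j k t.
Proof.
  intros hk ht; unfold EU_integrand.
  pose proof (apow_ge_1 p k hp hk); pose proof (fact_ge_1 (j - 1)).
  pose proof (exp_pos (- (apow p k * t))).
  assert (0 <= prod1_except (fun i => 1 - exp (- (apow p i * t))) k N).
  { apply prod1_except_range; intros i hi.
    pose proof (decay_range i t ltac:(lia) ht); unfold decay in *; lra. }
  apply Rmult_le_pos; [|assumption]; apply Rmult_le_pos; [|apply Rlt_le, Rinv_0_lt_compat; lra].
  apply Rmult_le_pos; [apply Rmult_le_pos|apply pow_le]; nra.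
Qed.

Lemma EU_integrand_le j N k t : (1 <= k)%nat -> 0 <= t ->
  EU_integrand (apow p) N j k t <= apow p k * exp (- (apow p k * t)) * (apow p k * t) ^ (j - 1).
Proof.
  intros hk ht; pose proof (apow_ge_1 p k hp hk); unfold EU_integrand; set (a := apow p k) in *.
  assert (0 <= prod1_except (fun i => 1 - exp (- (apow p i * t))) k N <= 1).
  { apply prod1_except_range; intros i hi.
    pose proof (decay_range i t ltac:(lia) ht); unfold decay in *; lra. }
  pose proof (fact_ge_1 (j - 1)); pose proof (exp_pos (- (a * t))).
  assert (0 <= a * exp (- (a * t)) * (a * t) ^ (j - 1))
    by (apply Rmult_le_pos; [|apply pow_le]; nra).
  apply Rle_trans with (a * exp (- (a * t)) * (a * t) ^ (j - 1) / INR (fact (j - 1))).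
  - rewrite <- Rmult_1_r; apply Rmult_le_compat_l; [|lra].
    apply Rmult_le_pos, Rlt_le, Rinv_0_lt_compat; lra.
  - unfold Rdiv; rewrite <- Rmult_1_r; apply Rmult_le_compat_l; [lra|].
    rewrite <- Rinv_1; apply Rinv_le_contravar; lra.
Qed.

Lemma EU_integrand_dominated j N k : (1 <= j)%nat -> (1 <= k)%nat ->
  dominated (EU_integrand (apow p) N j k) (apow p k ^ j + INR (j + 1) ^ (j + 1)).
Proof.
  intros hj hk; pose proof (apow_ge_1 p k hp hk) as Ha.
  pose proof (EU_integrand_le j N k) as HB; set (a := apow p k) in *.
  assert (HC : 0 < INR (j + 1) ^ (j + 1)) by (apply pow_lt, lt_0_INR; lia).
  assert (Haj : a * a ^ (j - 1) = a ^ j) by (destruct j; [lia|]; simpl; rewrite Nat.sub_0_r; ring).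
  split; [|split]; intros t ht.
  - apply EU_integrand_nonneg; [exact hk|lra].
  - eapply Rle_trans; [apply HB; [exact hk|lra]|].
    pose proof (decay_range k t hk ltac:(lra)) as Hd; unfold decay in Hd; fold a in Hd.
    assert ((a * t) ^ (j - 1) <= a ^ (j - 1)) by (apply pow_incr; nra).
    assert (0 <= (a * t) ^ (j - 1)) by (apply pow_le; nra).
    apply Rle_trans with (a * 1 * a ^ (j - 1)); [|nra].
    apply Rmult_le_compat; [nra|lra|apply Rmult_le_compat_l|]; lra.
  (* exp (-s) s^(j+1) <= (j+1)^(j+1) with s = a t, and one factor a absorbed by a >= 1 *)
  - eapply Rle_trans; [apply HB; [exact hk|lra]|].
    pose proof (exp_opp_mul_pow_le (j + 1) (a * t) ltac:(lia) ltac:(nra)) as H.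
    replace ((a * t) ^ (j + 1)) with ((a * t) ^ (j - 1) * (a * t) ^ 2) in H
      by (rewrite <- pow_add; f_equal; lia).
    assert (0 < t ^ 2) by (apply pow_lt; lra).
    assert (0 <= exp (- (a * t)) * (a * t) ^ (j - 1))
      by (apply Rmult_le_pos; [apply Rlt_le, exp_pos|apply pow_le; nra]).
    apply Rle_trans with (INR (j + 1) ^ (j + 1) / t ^ 2).
    + apply (Rmult_le_reg_r (a * t ^ 2)); [nra|].
      replace (INR (j + 1) ^ (j + 1) / t ^ 2 * (a * t ^ 2)) with (INR (j + 1) ^ (j + 1) * a)
        by (field; lra).
      replace (a * exp (- (a * t)) * (a * t) ^ (j - 1) * (a * t ^ 2))
        with (exp (- (a * t)) * ((a * t) ^ (j - 1) * (a * t) ^ 2)) by ring.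
      nra.
    + pose proof (pow_lt a j); unfold Rdiv; apply Rmult_le_compat_r; [|lra].
      apply Rlt_le, Rinv_0_lt_compat; lra.
Qed.

Section Lsum.

Variable j : nat.
Hypothesis hjm : 2 <= p * INR (m + 1 - j).

Lemma j_le_m : (j <= m)%nat.
Proof.
  apply Nat.nlt_ge; intros H; replace (m + 1 - j)%nat with 0%nat in hjm by lia.
  simpl in hjm; lra.
Qed.

Lemma Lterm_le_inv_sq k t : (1 <= k)%nat -> 0 < t ->
  Lterm p j k t <= Cdecay m / t ^ (m + 1) * inv_sq k.
Proof.
  intros hk ht; pose proof (apow_ge_1 p k hp hk) as Ha; set (a := apow p k) in *.
  pose proof (exp_opp_ratio_pow_le m (a * t) m_ge_1 ltac:(nra)) as H.
  change (exp (- (a * t))) with (decay p k t) in H.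
  pose proof (decay_range k t hk ltac:(lra)); pose proof (decay_lt_1 k t hk ht).
  set (r := decay p k t / (1 - decay p k t)) in H.
  assert (Hr : 0 <= r) by (apply Rlt_le, Rdiv_lt_0_compat; lra).
  assert (Hk : INR k ^ 2 * a ^ j <= a ^ (m + 1)).
  { replace (m + 1)%nat with (m + 1 - j + j)%nat by (pose proof j_le_m; lia).
    rewrite pow_add; apply Rmult_le_compat_r; [apply pow_le; lra|apply sq_le_apow_pow; auto]. }
  replace (Lterm p j k t) with (a ^ j * r) by (unfold Lterm, r; fold a; field; lra).
  rewrite Rpow_mult_distr in H.
  assert (0 < t ^ (m + 1)) by (apply pow_lt; lra).
  assert (0 < INR k ^ 2) by (apply pow_lt, lt_0_INR; lia).
  unfold inv_sq; set (T := t ^ (m + 1)) in *; set (K2 := INR k ^ 2) in *.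
  apply (Rmult_le_reg_r (T * K2)); [nra|].
  replace (Cdecay m / T * / K2 * (T * K2)) with (Cdecay m) by (field; lra).
  assert (r * T * (a ^ (m + 1) - K2 * a ^ j) >= 0)
    by (apply Rle_ge, Rmult_le_pos; [apply Rmult_le_pos|]; lra).
  nra.
Qed.

Lemma Lpart_le N t : 0 < t -> Lpart p j N t <= 2 * (Cdecay m / t ^ (m + 1)).
Proof.
  intros ht; apply sum1_le_inv_sq; [apply Cdecay_div_nonneg, ht|].
  intros k hk; apply Lterm_le_inv_sq; auto.
Qed.

Lemma Lpart_tail N N' t : 0 < t -> (1 <= N <= N')%nat ->
  Lpart p j N' t - Lpart p j N t <= Cdecay m / t ^ (m + 1) * (/ INR N - / INR N').
Proof.
  intros ht; apply sum1_tail_le_inv_sq; [apply Cdecay_div_nonneg, ht|].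
  intros k hk; apply Lterm_le_inv_sq; auto.
Qed.

Lemma Llim_cv t : 0 < t -> Un_cv (fun N => Lpart p j N t) (Llim p j t).
Proof.
  intros ht; destruct (growing_cv (fun N => Lpart p j N t)) as [l Hl].
  - intros n; apply Lpart_mono; auto.
  - exists (2 * (Cdecay m / t ^ (m + 1))); intros x [n ->]; apply Lpart_le, ht.
  - unfold Llim; rewrite (lim_seq_unique _ l Hl); exact Hl.
Qed.

Lemma Llim_bounds N t : 0 < t -> (1 <= N)%nat ->
  Lpart p j N t <= Llim p j t <= 2 * (Cdecay m / t ^ (m + 1)) /\
  Llim p j t - Lpart p j N t <= Cdecay m / t ^ (m + 1) * / INR N.
Proof.
  intros ht hN; pose proof (Llim_cv t ht) as H; split; [split|].
  - apply (Un_cv_ge_eventually _ _ _ H); exists N; intros n hn; apply Lpart_mono; auto.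
  - apply (Un_cv_le_eventually _ _ _ H); exists O; intros n _; apply Lpart_le, ht.
  - enough (- Lpart p j N t - - Llim p j t <= Cdecay m / t ^ (m + 1) * / INR N) by lra.
    apply (Un_cv_tail_le (fun n => - Lpart p j n t)); auto.
    + intros eps heps; destruct (H eps heps) as [N0 HN0]; exists N0; intros n hn.
      unfold Rdist; rewrite <- Rabs_Ropp; replace (- (- Lpart p j n t - - Llim p j t))
        with (Lpart p j n t - Llim p j t) by ring; apply HN0, hn.
    + apply Cdecay_div_nonneg, ht.
    + intros n hn; pose proof (Lpart_tail N n t ht ltac:(lia)); lra.
Qed.

(* Near 0, F_(m+1) = O(t^(m+1)) compensates L = O(t^-(m+1)); near oo, t^(j-1) <= t^(m-1). *)
Lemma product_dominated_at F L t : 0 < t ->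
  0 <= F <= Fpart p (m + 1) t -> 0 <= L <= 2 * (Cdecay m / t ^ (m + 1)) ->
  0 <= F * L * tfact j t /\ (t <= 1 -> F * L * tfact j t <= Kdom p m) /\
  (1 <= t -> F * L * tfact j t <= Kdom p m / t ^ 2).
Proof.
  intros ht HF HL.
  pose proof (Fpart_le_poly (m + 1) t ht); pose proof (Fpart_range (m + 1) t ht).
  pose proof (Cdecay_pos m) as HC; pose proof (tfact_range j t ltac:(lra)) as Hw.
  assert (HP : 0 < prod1 (apow p) (m + 1)).
  { apply prod1_pos; intros k hk; pose proof (apow_ge_1 p k hp ltac:(lia)); lra. }
  assert (Htm : 0 < t ^ (m + 1)) by (apply pow_lt; lra).
  set (P := prod1 (apow p) (m + 1)) in *; set (w := tfact j t) in *.
  assert (0 <= F * L) by nra.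
  split; [nra|split; intros Ht1].
  - assert (Hj1 : t ^ (j - 1) <= 1) by (rewrite <- (pow1 (j - 1)); apply pow_incr; lra).
    assert (F * L <= 2 * Cdecay m * P).
    { apply Rle_trans with (P * t ^ (m + 1) * (2 * (Cdecay m / t ^ (m + 1)))).
      - apply Rmult_le_compat; lra.
      - right; field; lra. }
    assert (F * L * w <= F * L * 1) by (apply Rmult_le_compat_l; lra).
    unfold Kdom; fold P; lra.
  - assert (Hpow : t ^ (j - 1) * t ^ 2 <= t ^ (m + 1))
      by (rewrite <- pow_add; apply Rle_pow; [lra|pose proof j_le_m; pose proof m_ge_1; lia]).
    assert (0 < t ^ 2) by (apply pow_lt; lra).
    assert (F * L * w <= 2 * (Cdecay m / t ^ (m + 1)) * t ^ (j - 1))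
      by (apply Rmult_le_compat; nra).
    assert (2 * (Cdecay m / t ^ (m + 1)) * t ^ (j - 1) <= 2 * Cdecay m / t ^ 2).
    { apply (Rmult_le_reg_r (t ^ (m + 1) * t ^ 2)); [nra|].
      replace (2 * (Cdecay m / t ^ (m + 1)) * t ^ (j - 1) * (t ^ (m + 1) * t ^ 2))
        with (2 * Cdecay m * (t ^ (j - 1) * t ^ 2)) by (field; lra).
      replace (2 * Cdecay m / t ^ 2 * (t ^ (m + 1) * t ^ 2)) with (2 * Cdecay m * t ^ (m + 1))
        by (field; lra).
      apply Rmult_le_compat_l; lra. }
    assert (2 * Cdecay m / t ^ 2 <= Kdom p m / t ^ 2).
    { unfold Kdom, Rdiv; fold P; apply Rmult_le_compat_r; [|nra].
      apply Rlt_le, Rinv_0_lt_compat; lra. }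
    lra.
Qed.

Lemma EU_sum_dominated N : (2 <= j)%nat -> (m + 1 <= N)%nat -> dominated (EU_sum p j N) (Kdom p m).
Proof.
  intros hj2 hN; apply dominated_intro.
  - unfold EU_sum; rewrite (sum1_ext _ (fun _ => 0)); [apply sum1_const0|]; intros k _.
    unfold EU_integrand; rewrite Rmult_0_r, pow_i by lia; unfold Rdiv; ring.
  - intros t ht; rewrite EU_sum_eq by (auto; lia); apply product_dominated_at; [exact ht| |].
    + pose proof (Fpart_range N t ht); split; [lra|apply Fpart_anti; auto].
    + split; [apply Lpart_nonneg|apply Lpart_le]; exact ht.
Qed.

Lemma Glim_dominated : (2 <= j)%nat -> dominated (Glim p j) (Kdom p m).
Proof.
  intros hj2; apply dominated_intro.
  - unfold Glim, tfact; rewrite pow_i by lia; unfold Rdiv; ring.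
  - intros t ht; apply product_dominated_at; [exact ht| |].
    + apply Flim_bounds; [exact ht|lia].
    + destruct (Llim_bounds 1 t ht (le_n 1)) as [[H1 H2] _].
      pose proof (Lpart_nonneg j 1 t ht); split; lra.
Qed.

Lemma EU_sum_Glim_unif N u v t : (1 <= j)%nat -> (1 <= N)%nat -> 0 < u -> u <= t <= v ->
  Rabs (EU_sum p j N t - Glim p j t) <= Cunif j m u v * / INR N.
Proof.
  intros hj hN hu ht; assert (ht0 : 0 < t) by lra.
  rewrite EU_sum_eq by auto; unfold Glim, Cunif.
  destruct (Flim_bounds N t ht0 hN) as [HF1 HF2]; destruct (Llim_bounds N t ht0 hN) as [HL1 HL2].
  pose proof (Fpart_range N t ht0); pose proof (Lpart_nonneg j N t ht0).
  pose proof (Cdecay_pos m) as HC.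
  assert (HiN : 0 < / INR N) by (apply Rinv_0_lt_compat, lt_0_INR; lia).
  assert (Hw : 0 <= tfact j t <= v ^ (j - 1)).
  { pose proof (tfact_range j t ltac:(lra)); pose proof (pow_incr t v (j - 1) ltac:(lra)); lra. }
  assert (Hdiv : forall n, 0 <= Cdecay m / t ^ n <= Cdecay m / u ^ n).
  { intros n; pose proof (pow_lt u n hu); pose proof (pow_lt t n ht0).
    split; [apply Rlt_le, Rdiv_lt_0_compat; lra|].
    apply Rmult_le_compat_l; [lra|apply Rinv_le_contravar; [lra|apply pow_incr; lra]]. }
  destruct (Hdiv m) as [Hm1 Hm2]; destruct (Hdiv (m + 1)%nat) as [Hm3 Hm4].
  set (A := Fpart p N t) in *; set (B := Lpart p j N t) in *.
  set (F := Flim p t) in *; set (L := Llim p j t) in *; set (W := tfact j t) in *.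
  (* A B - F L = (A - F) B + F (B - L), each piece controlled by a tail bound *)
  replace (A * B * W - F * L * W) with (((A - F) * B + F * (B - L)) * W) by ring.
  rewrite Rabs_mult, (Rabs_right W) by lra.
  assert (X1 : 0 <= (A - F) * B <= Cdecay m / u ^ m * / INR N * (2 * (Cdecay m / u ^ (m + 1)))).
  { split; [nra|apply Rmult_le_compat; try lra].
    apply Rle_trans with (Cdecay m / t ^ m * / INR N); [lra|apply Rmult_le_compat_r; lra]. }
  assert (X2 : 0 <= F * (L - B) <= Cdecay m / u ^ (m + 1) * / INR N).
  { split; [nra|apply Rle_trans with (1 * (Cdecay m / t ^ (m + 1) * / INR N))].
    - apply Rmult_le_compat; lra.
    - rewrite Rmult_1_l; apply Rmult_le_compat_r; lra. }
  eapply Rle_trans; [apply Rmult_le_compat_r; [lra|apply Rabs_triang]|].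
  rewrite Rabs_right, Rabs_left1 by nra.
  replace ((Cdecay m / u ^ m * (2 * (Cdecay m / u ^ (m + 1))) + Cdecay m / u ^ (m + 1)) *
    v ^ (j - 1) * / INR N) with
    ((Cdecay m / u ^ m * / INR N * (2 * (Cdecay m / u ^ (m + 1))) +
      Cdecay m / u ^ (m + 1) * / INR N) * v ^ (j - 1)) by ring.
  apply Rmult_le_compat; nra.
Qed.

End Lsum.

End Decay.

(** * Continuity and integrals *)

Lemma continuous_sum1 (F : nat -> R -> R) n (t : R) :
  (forall k, continuous (F k) t) -> continuous (fun t => sum1 (fun k => F k t) n) t.
Proof.
  intros H; induction n as [|n IH]; [apply continuous_const|].
  apply (continuous_ext (fun x => sum1 (fun k => F k x) n + F (S n) x)).
  - intros x; rewrite sum1_S; reflexivity.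
  - apply (continuous_plus (fun x => sum1 (fun k => F k x) n) (F (S n))); auto.
Qed.

Lemma continuous_prod1_except (F : nat -> R -> R) k n (t : R) :
  (forall i, continuous (F i) t) -> continuous (fun t => prod1_except (fun i => F i t) k n) t.
Proof.
  intros H; induction n as [|n IH]; [apply continuous_const|]; cbn [prod1_except].
  destruct (Nat.eq_dec (S n) k).
  - apply (continuous_mult (fun x => prod1_except (fun i => F i x) k n) (fun _ => 1)); auto.
    apply continuous_const.
  - apply (continuous_mult (fun x => prod1_except (fun i => F i x) k n) (F (S n))); auto.
Qed.

Lemma EU_integrand_continuous a N j k (t : R) : continuous (EU_integrand a N j k) t.
Proof.
  unfold EU_integrand.
  apply (continuous_mult
    (fun t => a k * exp (- (a k * t)) * (a k * t) ^ (j - 1) / INR (fact (j - 1)))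
    (fun t => prod1_except (fun i => 1 - exp (- (a i * t))) k N)).
  - apply (ex_derive_continuous (K := R_AbsRing) (V := R_NormedModule)); auto_derive; easy.
  - apply (continuous_prod1_except (fun i t => 1 - exp (- (a i * t)))); intros i.
    apply (ex_derive_continuous (K := R_AbsRing) (V := R_NormedModule)); auto_derive; easy.
Qed.

Lemma EU_sum_continuous p j N (t : R) : continuous (EU_sum p j N) t.
Proof.
  apply (continuous_sum1 (fun k t => EU_integrand (apow p) N j k t)); intros k.
  apply EU_integrand_continuous.
Qed.

Lemma ex_RInt_continuous_on (f : R -> R) a b : a <= b ->
  (forall t, a <= t <= b -> continuous f t) -> ex_RInt f a b.
Proof.
  intros hab H; apply (ex_RInt_continuous (V := R_CompleteNormedModule)); intros z hz.
  rewrite Rmin_left, Rmax_right in hz by lra; apply H, hz.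
Qed.

Lemma RInt_nonneg (f : R -> R) a b : a <= b -> ex_RInt f a b ->
  (forall t, a <= t <= b -> 0 <= f t) -> 0 <= RInt f a b.
Proof. intros hab hf H; apply RInt_ge_0; auto; intros; apply H; lra. Qed.

Lemma RInt_Chasles_R (f : R -> R) a b c : ex_RInt f a b -> ex_RInt f b c ->
  RInt f a b + RInt f b c = RInt f a c.
Proof. intros H1 H2; exact (RInt_Chasles f a b c H1 H2). Qed.

Lemma RInt_le_const (f : R -> R) a b K : a <= b -> ex_RInt f a b ->
  (forall t, a <= t <= b -> 0 <= f t <= K) -> RInt f a b <= (b - a) * K.
Proof.
  intros hab hf H; eapply Rle_trans; [apply Rle_abs|].
  apply (abs_RInt_le_const f a b K hab hf); intros t ht.
  rewrite Rabs_right by (apply Rle_ge, H, ht); apply H, ht.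
Qed.

Lemma RInt_le_inv_sq (f : R -> R) K a b : 0 < a <= b ->
  (forall t, a <= t <= b -> continuous f t) -> (forall t, a <= t <= b -> f t <= K / t ^ 2) ->
  RInt f a b <= K / a - K / b.
Proof.
  intros hab hc H.
  assert (Hsq : is_RInt (fun t => K / t ^ 2) a b (K / a - K / b)).
  { replace (K / a - K / b) with (minus ((fun t => - (K / t)) b) ((fun t => - (K / t)) a))
      by (unfold minus, plus, opp; simpl; ring).
    apply (is_RInt_derive (V := R_CompleteNormedModule) (fun t => - (K / t))); intros x hx;
      rewrite Rmin_left, Rmax_right in hx by lra.
    - auto_derive; [lra|field; lra].
    - apply (ex_derive_continuous (K := R_AbsRing) (V := R_NormedModule)); auto_derive.
      repeat split; nra. }
  rewrite <- (is_RInt_unique _ _ _ _ Hsq).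
  apply RInt_le; [lra|apply ex_RInt_continuous_on; [lra|exact hc]|now exists (K / a - K / b)|].
  intros t ht; apply H; lra.
Qed.

Lemma RInt_diff_le (f g : R -> R) a b M : a <= b -> ex_RInt f a b -> ex_RInt g a b ->
  (forall t, a <= t <= b -> Rabs (f t - g t) <= M) -> Rabs (RInt f a b - RInt g a b) <= (b - a) * M.
Proof.
  intros hab hf hg H.
  replace (RInt f a b - RInt g a b) with (RInt (fun t => f t - g t) a b)
    by (apply (RInt_minus f g); auto).
  apply abs_RInt_le_const; [exact hab| |exact H].
  apply (ex_RInt_minus f g); auto.
Qed.

Lemma RInt_0_le_const (f : R -> R) u K : 0 <= u ->
  (forall t, 0 <= t <= u -> continuous f t) -> (forall t, 0 <= t <= u -> 0 <= f t <= K) ->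
  0 <= RInt f 0 u <= u * K.
Proof.
  intros hu hc H; assert (Hex : ex_RInt f 0 u) by (apply ex_RInt_continuous_on; auto).
  replace (u * K) with ((u - 0) * K) by ring.
  split; [apply RInt_nonneg|apply RInt_le_const]; auto; intros t ht; apply H, ht.
Qed.

Section Dominated.

Variables (f : R -> R) (K : R).
Hypotheses (hcont : forall t, 0 < t -> continuous f t) (hdom : dominated f K).

Lemma dominated_K_nonneg : 0 <= K.
Proof.
  destruct hdom as (H0 & H1 & _); pose proof (H0 0 (Rle_refl 0)); pose proof (H1 0 ltac:(lra)); lra.
Qed.

Lemma dominated_ex_RInt a b : 0 < a <= b -> ex_RInt f a b.
Proof. intros h; apply ex_RInt_continuous_on; [lra|]; intros; apply hcont; lra. Qed.

Lemma dominated_RInt_nonneg a b : 0 < a <= b -> 0 <= RInt f a b.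
Proof.
  intros h; apply RInt_nonneg; [lra|apply dominated_ex_RInt, h|].
  intros t ht; apply hdom; lra.
Qed.

Lemma dominated_RInt_head a b : 0 < a <= b -> b <= 1 -> RInt f a b <= (b - a) * K.
Proof.
  intros h hb; apply RInt_le_const; [lra|apply dominated_ex_RInt, h|].
  intros t ht; destruct hdom as (H0 & H1 & _); split; [apply H0|apply H1]; lra.
Qed.

Lemma dominated_RInt_tail a b : 1 <= a <= b -> RInt f a b <= K / a - K / b.
Proof.
  intros h; apply RInt_le_inv_sq; [lra| |]; intros t ht; [apply hcont|apply hdom]; lra.
Qed.

(* Both intervals extend to a common one; the extra pieces obey the head and tail bounds. *)
Lemma dominated_RInt_le u v u' v' : 0 < u <= 1 -> 1 <= v -> 0 < u' <= v' ->
  RInt f u' v' <= RInt f u v + K * u + K / v.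
Proof.
  intros hu hv hu'; pose proof dominated_K_nonneg.
  set (a := Rmin u u'); set (b := Rmax v v').
  assert (ha : 0 < a <= u /\ a <= u') by (unfold a; repeat split;
    [apply Rmin_glb_lt; lra|apply Rmin_l|apply Rmin_r]).
  assert (hb : v <= b /\ v' <= b) by (unfold b; split; [apply Rmax_l|apply Rmax_r]).
  assert (EX : forall x y, 0 < x <= y -> ex_RInt f x y) by exact dominated_ex_RInt.
  assert (E : RInt f a u' + RInt f u' v' + RInt f v' b = RInt f a u + RInt f u v + RInt f v b).
  { rewrite !RInt_Chasles_R by (apply EX; lra); reflexivity. }
  pose proof (dominated_RInt_nonneg a u' ltac:(lra)).
  pose proof (dominated_RInt_nonneg v' b ltac:(lra)).
  pose proof (dominated_RInt_head a u ltac:(lra) ltac:(lra)).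
  pose proof (dominated_RInt_tail v b ltac:(lra)).
  assert (0 <= K / b) by (apply Rmult_le_pos; [lra|apply Rlt_le, Rinv_0_lt_compat; lra]).
  assert ((u - a) * K <= K * u) by nra.
  lra.
Qed.

Lemma dominated_integral :
  exists l, forall u v, 0 < u <= 1 -> 1 <= v -> RInt f u v <= l <= RInt f u v + K * u + K / v.
Proof.
  destruct (completeness (fun y => exists u v, 0 < u <= v /\ y = RInt f u v)) as [l Hl].
  - exists (RInt f 1 1 + K * 1 + K / 1); intros y (u & v & h & ->).
    apply dominated_RInt_le; lra.
  - exists (RInt f 1 1), 1, 1; split; [lra|reflexivity].
  - exists l; intros u v hu hv; split.
    + apply Hl; exists u, v; split; [lra|reflexivity].
    + apply Hl; intros y (u' & v' & h & ->); apply dominated_RInt_le; auto.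
Qed.

End Dominated.

Lemma exists_small_factor K eps : 0 <= K -> 0 < eps -> exists u, 0 < u <= 1 /\ K * u <= eps.
Proof.
  intros hK heps; exists (Rmin 1 (eps / (K + 1))); split; [split|].
  - apply Rmin_glb_lt; [lra|apply Rdiv_lt_0_compat; lra].
  - apply Rmin_l.
  - apply Rle_trans with (K * (eps / (K + 1))); [apply Rmult_le_compat_l, Rmin_r; lra|].
    apply (Rmult_le_reg_r (K + 1)); [lra|].
    replace (K * (eps / (K + 1)) * (K + 1)) with (K * eps) by (field; lra); nra.
Qed.

Lemma dominated_improper_int_0_inf (f : R -> R) K :
  (forall t, 0 <= t -> continuous f t) -> dominated f K ->
  exists l, improper_int_0_inf f l /\ forall T, 1 <= T -> RInt f 0 T <= l <= RInt f 0 T + K / T.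
Proof.
  intros hc hd; pose proof (dominated_K_nonneg f K hd) as HK.
  destruct (dominated_integral f K ltac:(intros; apply hc; lra) hd) as [l Hl].
  assert (Hex : forall a b, 0 <= a <= b -> ex_RInt f a b)
    by (intros a b h; apply ex_RInt_continuous_on; [lra|]; intros; apply hc; lra).
  assert (Hbound : forall T, 1 <= T -> RInt f 0 T <= l <= RInt f 0 T + K / T).
  { intros T hT.
    (* the part of the integral over [0, u] is at most K u, which can be made arbitrarily small *)
    assert (Hu : forall eps, 0 < eps -> RInt f 0 T <= l + eps /\ l <= RInt f 0 T + K / T + eps).
    { intros eps heps; destruct (exists_small_factor K eps HK heps) as (u & hu & HKu).
      specialize (Hl u T hu hT).
      rewrite <- (RInt_Chasles_R f 0 u T) by (apply Hex; lra).
      assert (0 <= RInt f 0 u <= u * K).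
      { apply RInt_0_le_const; [lra|intros; apply hc; lra|].
        intros t ht; destruct hd as (H0 & H1 & _); split; [apply H0|apply H1]; lra. }
      lra. }
    split; apply Rle_plus_epsilon; intros eps heps; apply Hu, heps. }
  exists l; split; [split|exact Hbound].
  - intros T hT; constructor; apply ex_RInt_Reals_0, Hex; lra.
  - intros eps heps.
    assert (0 <= K / eps) by (apply Rmult_le_pos; [lra|apply Rlt_le, Rinv_0_lt_compat, heps]).
    exists (1 + K / eps); split; [lra|]; intros T pr hT.
    rewrite <- RInt_Reals; specialize (Hbound T ltac:(lra)).
    assert (K / T < eps).
    { apply (Rmult_lt_reg_r T); [lra|]; unfold Rdiv; rewrite Rmult_assoc, Rinv_l by lra.
      replace K with (eps * (K / eps)) at 1 by (field; lra); nra. }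
    rewrite Rabs_left1 by lra; lra.
Qed.

Lemma improper_int_0_inf_is_lim f l :
  improper_int_0_inf f l -> is_lim (fun T => RInt f 0 T) p_infty l.
Proof.
  intros [Hex Hcv]; apply is_lim_spec; intros eps.
  destruct (Hcv eps (cond_pos eps)) as (M & hM & HM); exists M; intros T hT.
  destruct (Hex T ltac:(lra)) as [pr]; rewrite (RInt_Reals f 0 T pr); apply HM; lra.
Qed.

Definition improper_value (f : R -> R) : R := epsilon (inhabits 0) (improper_int_0_inf f).

Lemma improper_value_spec f :
  (exists l, improper_int_0_inf f l) -> improper_int_0_inf f (improper_value f).
Proof. apply (epsilon_spec (inhabits 0) (improper_int_0_inf f)). Qed.

Lemma is_lim_sum1 (g : nat -> R -> R) (c : nat -> R) x N :
  (forall k, (1 <= k <= N)%nat -> is_lim (g k) x (c k)) ->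
  is_lim (fun y => sum1 (fun k => g k y) N) x (sum1 c N).
Proof.
  induction N as [|N IH]; intros H; [apply is_lim_const|].
  apply (is_lim_ext (fun y => sum1 (fun k => g k y) N + g (S N) y));
    [intros; symmetry; apply sum1_S|].
  rewrite sum1_S; apply is_lim_plus'; [apply IH; intros; apply H|apply H]; lia.
Qed.

Lemma RInt_sum1 (F : nat -> R -> R) a b N :
  (forall k, (1 <= k <= N)%nat -> ex_RInt (F k) a b) ->
  ex_RInt (fun t => sum1 (fun k => F k t) N) a b /\
  RInt (fun t => sum1 (fun k => F k t) N) a b = sum1 (fun k => RInt (F k) a b) N.
Proof.
  induction N as [|N IH]; intros H.
  - change (ex_RInt (fun _ => 0) a b /\ RInt (fun _ => 0) a b = 0).
    split; [apply ex_RInt_const|]; rewrite RInt_const; unfold scal; simpl; unfold mult; simpl; ring.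
  - destruct IH as [IH1 IH2]; [intros; apply H; lia|].
    assert (E : forall t, sum1 (fun k => F k t) (S N) = sum1 (fun k => F k t) N + F (S N) t)
      by (intros; apply sum1_S).
    split.
    + apply (ex_RInt_ext (fun t => sum1 (fun k => F k t) N + F (S N) t));
        [intros; symmetry; apply E|].
      apply (ex_RInt_plus (fun t => sum1 (fun k => F k t) N) (F (S N))); [exact IH1|apply H; lia].
    + rewrite (RInt_ext _ (fun t => sum1 (fun k => F k t) N + F (S N) t)) by (intros; apply E).
      rewrite (RInt_plus (fun t => sum1 (fun k => F k t) N) (F (S N))); [|exact IH1|apply H; lia].
      rewrite IH2, sum1_S; reflexivity.
Qed.

(** * The substitution x = exp (- t) and x_alpha *)

Lemma rpow_exp_opp t y : rpow (exp (- t)) y = exp (- (y * t)).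
Proof.
  unfold rpow; destruct (Rlt_dec 0 (exp (- t))) as [_|H]; [|pose proof (exp_pos (- t)); lra].
  unfold Rpower; rewrite ln_exp; f_equal; ring.
Qed.

Lemma Ffun_exp_opp p t : Ffun (apow p) (exp (- t)) = Flim p t.
Proof.
  unfold Ffun, Flim, Fpart; f_equal; extensionality N; apply prod1_ext; intros k _.
  rewrite rpow_exp_opp; reflexivity.
Qed.

Lemma Lfun_exp_opp p j t : Lfun (apow p) j (exp (- t)) = Llim p j t.
Proof.
  unfold Lfun, Llim, Lpart; f_equal; extensionality N; apply sum1_ext; intros k _.
  rewrite rpow_exp_opp; reflexivity.
Qed.

Lemma I_integrand_exp_opp p j t : 0 < t ->
  I_integrand (apow p) j (exp (- t)) * exp (- t) = Glim p j t.
Proof.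
  intros ht; unfold I_integrand, Glim, tfact.
  rewrite Ffun_exp_opp, Lfun_exp_opp, ln_exp, Rabs_Ropp, Rabs_right by lra.
  pose proof (exp_pos (- t)); pose proof (fact_ge_1 (j - 1)); field; try split; lra.
Qed.

Lemma opp_ln_pos y : 0 < y < 1 -> 0 < - ln y.
Proof. intros hy; pose proof (ln_increasing y 1 ltac:(lra) ltac:(lra)); rewrite ln_1 in *; lra. Qed.

Lemma opp_ln_le d : 1 / 2 <= d < 1 -> - ln d <= 2 * (1 - d).
Proof.
  intros hd; pose proof (exp_ineq1_le (ln (/ d))) as H.
  rewrite exp_ln, ln_Rinv in H by (try apply Rinv_0_lt_compat; lra).
  assert (/ d <= 1 + 2 * (1 - d)) by (apply (Rmult_le_reg_r d); [lra|]; rewrite Rinv_l by lra; nra).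
  lra.
Qed.

Lemma series_diverges_1 : series_diverges (fun _ => 1).
Proof.
  intros [l Hl]; destruct (Hl 1 ltac:(lra)) as [N HN].
  assert (E : forall n, sum1 (fun _ => 1) n = INR n)
    by (induction n as [|n IH]; [reflexivity|rewrite sum1_S, IH, S_INR; ring]).
  pose proof (HN N (le_n N)) as H1; pose proof (HN (N + 2)%nat ltac:(lia)) as H2.
  unfold Rdist in *; rewrite !E, plus_INR in *; simpl INR in H2.
  apply Rabs_def2 in H1; apply Rabs_def2 in H2; lra.
Qed.

Lemma exists_q p : 0 < p -> exists q, 2 <= p * INR q.
Proof.
  intros hp; destruct (archimed_cor1 (p / 2)) as (q & Hq & hq); [lra|].
  exists q; assert (0 < INR q) by (apply lt_0_INR, hq).
  apply (Rmult_lt_compat_r (INR q)) in Hq; [|exact H].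
  rewrite Rinv_l in Hq by lra; lra.
Qed.

(* 0 < x < 1 gives x ^ (a_k) = decay p k (- ln x), a summable sequence *)
Lemma is_x_alpha_apow p : 0 < p -> is_x_alpha (apow p) 1.
Proof.
  intros hp; destruct (exists_q p hp) as [q hq]; split.
  - intros y (x & hx & hdiv & ->); apply Ropp_le_contravar.
    destruct (Req_dec x 1) as [->|hx1]; [lra|exfalso; apply hdiv].
    destruct (Req_dec x 0) as [->|hx0].
    + exists 0; apply (Un_cv_ext (fun _ => 0)).
      2: { intros e he; exists O; intros; unfold Rdist; rewrite Rminus_0_r, Rabs_R0; exact he. }
      intros n; symmetry; rewrite (sum1_ext _ (fun _ => 0)); [apply sum1_const0|]; intros k _.
      unfold rpow; destruct (Rlt_dec 0 0); [lra|reflexivity].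
    + assert (Ht : 0 < - ln x) by (apply opp_ln_pos; lra).
      destruct (decay_series_cv p q hp hq (- ln x) Ht) as [l Hl]; exists l.
      apply (Un_cv_ext (sum1 (fun k => decay p k (- ln x)))); [|exact Hl].
      intros n; apply sum1_ext; intros k _; unfold decay.
      rewrite <- rpow_exp_opp, Ropp_involutive, exp_ln by lra; reflexivity.
  - intros b Hb; apply Hb; exists 1; split; [lra|split; [|reflexivity]].
    replace (fun k => rpow 1 (apow p k)) with (fun _ : nat => 1); [apply series_diverges_1|].
    extensionality k; unfold rpow; destruct (Rlt_dec 0 1); [|lra].
    unfold Rpower; rewrite ln_1, Rmult_0_r, exp_0; reflexivity.
Qed.

(** * Convergence *)

Definition EU_value (p : R) (j N : nat) : R :=
  sum1 (fun k => improper_value (EU_integrand (apow p) N j k)) N.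

Lemma EU_integrand_improper p j N k : 0 < p -> (1 <= j)%nat -> (1 <= k)%nat ->
  improper_int_0_inf (EU_integrand (apow p) N j k) (improper_value (EU_integrand (apow p) N j k)).
Proof.
  intros hp hj hk; apply improper_value_spec.
  destruct (dominated_improper_int_0_inf _ _ (fun t _ => EU_integrand_continuous _ N j k t)
    (EU_integrand_dominated p hp j N k hj hk)) as (l & Hl & _).
  now exists l.
Qed.

Lemma EU_value_is_EU p j N : 0 < p -> (1 <= j)%nat -> is_EU (apow p) N j (EU_value p j N).
Proof.
  intros hp hj; exists (fun k => improper_value (EU_integrand (apow p) N j k)).
  split; [|reflexivity].
  intros k hk; apply EU_integrand_improper; [exact hp|exact hj|apply hk].
Qed.

Section Limit.

Variables (p : R) (m j : nat).
Hypotheses (hp : 0 < p) (hpm : 2 <= p * INR m) (hjm : 2 <= p * INR (m + 1 - j)) (hj : (2 <= j)%nat).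

Lemma EU_value_approx N T : (m + 1 <= N)%nat -> 1 <= T ->
  RInt (EU_sum p j N) 0 T <= EU_value p j N <= RInt (EU_sum p j N) 0 T + Kdom p m / T.
Proof.
  intros hN hT.
  destruct (dominated_improper_int_0_inf (EU_sum p j N) (Kdom p m)) as (l & Hl & Hb).
  { intros; apply EU_sum_continuous. }
  { apply EU_sum_dominated; auto. }
  replace (EU_value p j N) with l; [apply Hb, hT|].
  (* both numbers are the limit of T |-> RInt (EU_sum p j N) 0 T *)
  assert (H : is_lim (fun T => RInt (EU_sum p j N) 0 T) p_infty (EU_value p j N)).
  { apply (is_lim_ext_loc (fun T => sum1 (fun k => RInt (EU_integrand (apow p) N j k) 0 T) N)).
    - exists 0; intros T' hT'; symmetry; apply RInt_sum1; intros k _.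
      apply ex_RInt_continuous_on; [lra|intros; apply EU_integrand_continuous].
    - apply is_lim_sum1; intros k hk; apply improper_int_0_inf_is_lim, EU_integrand_improper;
        [exact hp|lia|apply hk]. }
  apply is_lim_unique in H; rewrite (is_lim_unique _ _ _ (improper_int_0_inf_is_lim _ _ Hl)) in H.
  now injection H.
Qed.

Lemma Glim_continuous t : 0 < t -> continuous (Glim p j) t.
Proof.
  intros ht; apply continuity_pt_filterlim.
  apply (CVU_continuity (fun N => EU_sum p j N) (Glim p j) t (mkposreal (t / 2) ltac:(lra))).
  - intros eps heps.
    destruct (INR_inv_small (Cunif j m (t / 2) (3 * t / 2)) eps heps) as (N0 & hN0 & HN).
    exists N0; intros n y hn hy; unfold Boule in hy; simpl in hy; apply Rabs_def2 in hy.
    rewrite Rabs_minus_sym; eapply Rle_lt_trans; [|apply HN, hn].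
    apply (EU_sum_Glim_unif p m hp hpm j hjm n (t / 2) (3 * t / 2) y); lia || lra.
  - intros n y _; apply continuity_pt_filterlim, EU_sum_continuous.
  - unfold Boule; rewrite Rminus_diag, Rabs_R0; simpl; lra.
Qed.

Lemma I_integrand_continuous x : 0 < x < 1 -> continuous (I_integrand (apow p) j) x.
Proof.
  intros hx; apply (continuous_ext_loc _ (fun y => Glim p j (- ln y) * / y)).
  - apply (locally_interval _ x 0 1); simpl; try lra; intros y hy0 hy1; simpl in *.
    rewrite <- I_integrand_exp_opp by (apply opp_ln_pos; lra).
    rewrite Ropp_involutive, exp_ln by lra; field; lra.
  - apply (continuous_mult (fun y => Glim p j (- ln y)) (fun y => / y)).
    + apply (continuous_comp (fun y => - ln y) (Glim p j)).
      * apply (ex_derive_continuous (K := R_AbsRing) (V := R_NormedModule)); auto_derive; lra.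
      * apply Glim_continuous, opp_ln_pos; lra.
    + apply (ex_derive_continuous (K := R_AbsRing) (V := R_NormedModule)); auto_derive; lra.
Qed.

Lemma RInt_I_integrand c d : 0 < c <= d -> d < 1 ->
  ex_RInt (I_integrand (apow p) j) c d /\
  RInt (I_integrand (apow p) j) c d = RInt (Glim p j) (- ln d) (- ln c).
Proof.
  intros hc hd.
  assert (Hex : ex_RInt (I_integrand (apow p) j) c d).
  { apply ex_RInt_continuous_on; [lra|]; intros; apply I_integrand_continuous; lra. }
  split; [exact Hex|].
  assert (Hcd : - ln d <= - ln c) by (pose proof (ln_le c d ltac:(lra) ltac:(lra)); lra).
  pose proof (opp_ln_pos d ltac:(lra)) as Hd.
  pose proof (is_RInt_comp (V := R_CompleteNormedModule) (I_integrand (apow p) j)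
    (fun t => exp (- t)) (fun t => - exp (- t)) (- ln d) (- ln c)) as H.
  rewrite Rmin_left, Rmax_right, !Ropp_involutive, (exp_ln d), (exp_ln c) in H by lra.
  assert (Hcont : forall y, - ln d <= y <= - ln c ->
    continuous (I_integrand (apow p) j) (exp (- y))).
  { intros y hy; apply I_integrand_continuous; split; [apply exp_pos|].
    rewrite <- exp_0; apply exp_increasing; lra. }
  assert (Hder : forall y, - ln d <= y <= - ln c ->
    is_derive (fun t => exp (- t)) y (- exp (- y)) /\ continuous (fun t => - exp (- t)) y).
  { intros y _; split; [auto_derive; [easy|ring]|].
    apply (ex_derive_continuous (K := R_AbsRing) (V := R_NormedModule)); auto_derive; easy. }
  specialize (H Hcont Hder); apply is_RInt_opp in H.
  assert (H' : is_RInt (Glim p j) (- ln d) (- ln c) (opp (RInt (I_integrand (apow p) j) d c))).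
  { refine (is_RInt_ext _ _ _ _ _ _ H); intros y hy; rewrite Rmin_left, Rmax_right in hy by lra.
    rewrite <- (I_integrand_exp_opp p j y), <- (scal_opp_l (V := R_NormedModule)) by lra.
    change (- - exp (- y) * I_integrand (apow p) j (exp (- y)) =
      I_integrand (apow p) j (exp (- y)) * exp (- y)).
    rewrite Ropp_involutive; apply Rmult_comm. }
  rewrite (is_RInt_unique _ _ _ _ H'), <- (opp_RInt_swap _ c d Hex), opp_opp; reflexivity.
Qed.

Lemma Glim_integral : exists I, forall u v, 0 < u <= 1 -> 1 <= v ->
  RInt (Glim p j) u v <= I <= RInt (Glim p j) u v + Kdom p m * u + Kdom p m / v.
Proof.
  apply dominated_integral; [intros; apply Glim_continuous; lra|].
  apply (Glim_dominated p m hp hpm j hjm hj).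
Qed.

Section Value.

Variable I : R.
Hypothesis hI : forall u v, 0 < u <= 1 -> 1 <= v ->
  RInt (Glim p j) u v <= I <= RInt (Glim p j) u v + Kdom p m * u + Kdom p m / v.

Lemma I_integrand_improper : improper_int_open (I_integrand (apow p) j) 0 1 I.
Proof.
  pose proof (dominated_K_nonneg _ _ (Glim_dominated p m hp hpm j hjm hj)) as HK.
  split; [intros c d hc hcd hd; constructor; apply ex_RInt_Reals_0, RInt_I_integrand; lra|].
  intros eps heps.
  destruct (exists_small_factor (Kdom p m) (eps / 3) HK ltac:(lra)) as (u & hu & Hu).
  assert (Hv : 0 < exp (- / u)) by apply exp_pos.
  exists (Rmin (u / 2) (exp (- / u))); split; [apply Rmin_glb_lt; lra|].
  intros c d pr hc hcu hdu hd hcd; rewrite Rplus_0_l in hcu.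
  pose proof (Rmin_l (u / 2) (exp (- / u))); pose proof (Rmin_r (u / 2) (exp (- / u))).
  rewrite <- RInt_Reals; destruct (RInt_I_integrand c d ltac:(lra) hd) as [_ ->].
  (* - ln d is small since d is close to 1, and - ln c is large since c is close to 0 *)
  assert (Hd : 0 < - ln d <= u)
    by (pose proof (opp_ln_pos d ltac:(lra)); pose proof (opp_ln_le d ltac:(lra)); lra).
  assert (Hc : / u < - ln c).
  { pose proof (ln_increasing c (exp (- / u)) ltac:(lra) ltac:(lra)); rewrite ln_exp in *; lra. }
  assert (Hcinv : / - ln c <= u).
  { rewrite <- (Rinv_inv u); apply Rinv_le_contravar; [apply Rinv_0_lt_compat|]; lra. }
  assert (1 <= / u) by (rewrite <- Rinv_1; apply Rinv_le_contravar; lra).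
  destruct (hI (- ln d) (- ln c) ltac:(lra) ltac:(lra)) as [H2 H3].
  assert (Kdom p m * - ln d <= Kdom p m * u) by (apply Rmult_le_compat_l; lra).
  assert (Kdom p m / - ln c <= Kdom p m * u) by (apply Rmult_le_compat_l; lra).
  rewrite Rabs_left1 by lra; lra.
Qed.

(* |EU_value n - I| <= 2 K u + 2 K / v + (v - u) Cunif / n: head [0, u] and tail [v, oo) of
   both integrals are small, and on [u, v] the integrands converge uniformly. *)
Lemma EU_value_cv : Un_cv (EU_value p j) I.
Proof.
  pose proof (dominated_K_nonneg _ _ (Glim_dominated p m hp hpm j hjm hj)) as HK.
  intros eps heps.
  destruct (exists_small_factor (Kdom p m) (eps / 8) HK ltac:(lra)) as (u & hu & Hu).
  set (v := / u).
  assert (hv : 1 <= v) by (unfold v; rewrite <- Rinv_1; apply Rinv_le_contravar; lra).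
  assert (HKv : Kdom p m / v = Kdom p m * u) by (unfold v, Rdiv; rewrite Rinv_inv; reflexivity).
  destruct (INR_inv_small ((v - u) * Cunif j m u v) (eps / 2) ltac:(lra)) as (N1 & hN1 & HN).
  exists (max N1 (m + 1)); intros n hn; unfold Rdist.
  assert (hn1 : (m + 1 <= n)%nat) by lia.
  pose proof (EU_value_approx n v hn1 hv) as P1.
  pose proof (EU_sum_dominated p m hp hpm j hjm n hj hn1) as Hdom.
  rewrite <- (RInt_Chasles_R _ 0 u v) in P1 by
    (apply ex_RInt_continuous_on; [lra|intros; apply EU_sum_continuous]).
  assert (P2 : 0 <= RInt (EU_sum p j n) 0 u <= u * Kdom p m).
  { apply RInt_0_le_const; [lra|intros; apply EU_sum_continuous|].
    intros t ht; destruct Hdom as (H0 & H1 & _); split; [apply H0|apply H1]; lra. }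
  assert (P3 : Rabs (RInt (EU_sum p j n) u v - RInt (Glim p j) u v) <=
    (v - u) * (Cunif j m u v * / INR n)).
  { apply RInt_diff_le; [lra| | |].
    - apply ex_RInt_continuous_on; [lra|intros; apply EU_sum_continuous].
    - apply ex_RInt_continuous_on; [lra|intros; apply Glim_continuous; lra].
    - intros t ht; apply EU_sum_Glim_unif; lia || lra. }
  specialize (HN n ltac:(lia)); destruct (hI u v hu hv) as [H1 H2].
  rewrite <- Rmult_assoc in P3; apply Rabs_le_between in P3.
  apply Rabs_def1; lra.
Qed.

End Value.

End Limit.

Theorem mainTheorem12 (p : R) (hp : 0 < p) (j : nat) (hj : (2 <= j)%nat)
  (xa : R) (hxa : is_x_alpha (apow p) xa) :
  exists I : R,
    improper_int_open (I_integrand (apow p) j) 0 xa I /\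
    exists E : nat -> R,
      (forall N, (2 <= N)%nat -> is_EU (apow p) N j (E N)) /\
      Un_cv E I.
Proof.
  assert (Hxa : xa = 1).
  { pose proof (is_lub_u _ _ _ hxa (is_x_alpha_apow p hp)); lra. }
  subst xa; destruct (exists_q p hp) as [q hq].
  set (m := (j - 1 + q)%nat).
  assert (hpm : 2 <= p * INR m).
  { apply Rle_trans with (p * INR q); [exact hq|].
    apply Rmult_le_compat_l; [lra|apply le_INR; unfold m; lia]. }
  assert (hjm : 2 <= p * INR (m + 1 - j))
    by (replace (m + 1 - j)%nat with q by (unfold m; lia); exact hq).
  destruct (Glim_integral p m j hp hpm hjm hj) as [I HI].
  exists I; split; [exact (I_integrand_improper p m j hp hpm hjm hj I HI)|].
  exists (EU_value p j); split.
  - intros N _; apply EU_value_is_EU; [exact hp|lia].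
  - exact (EU_value_cv p m j hp hpm hjm hj I HI).
Qed.
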